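(* Let $G\sim\mathrm{SBM}(n;C,P)$ with communities $V_1,\dots,V_c$, let $\mathbf{k}=(\mathbf{k}_1,\dots,\mathbf{k}_c)\in\mathbb{N}_0^c$ with $\mathbf{k}_\ell\le|V_\ell|$, and let $R$ consist of $\mathbf{k}_\ell$ vertices of $V_\ell$ for each $\ell$, chosen independently of the edges of $G$ (e.g. fixed, or uniformly at random within each community). Let $W$ be the number of unordered pairs of distinct rows of $\mathbf{A}^*$ that coincide on all columns in $R$. Then $$\mathbb{P}(R\text{ does not resolve }\mathbf{A}^* )=\mathbb{P}(W>0)\le\mathbb{E}(W)\le f(\mathbf{k}):=\sum_{1\le i\le j\le c}s(i,j)\prod_{\ell=1}^c r(i,j,\ell)^{\mathbf{k}_\ell},$$ where $s(i,i):=\binom{|V_i|}{2}$, $s(i,j):=|V_i||V_j|$ for $i\ne j$, and $r(i,j,\ell):=P(i,\ell)P(j,\ell)+(1-P(i,\ell))(1-P(j,\ell))$. Moreover $f$ is nonincreasing with respect to the componentwise order on $\mathbb{N}_0^c$, and whenever $R$ resolves $\mathbf{A}^*$ it is a resolving set of $G$.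
   Context: Stochastic Block Model: $G\sim\mathrm{SBM}(n;C,P)$, for a partition $C=\{V_1,\dots,V_c\}$ of $V=\{1,\dots,n\}$ and a symmetric $c\times c$ matrix $P$ with entries in $[0,1]$, is the random simple undirected graph on $V$ in which, independently for each pair of distinct vertices $u\in V_i$, $v\in V_j$, the edge $\{u,v\}$ is present with probability $P(i,j)$. $\mathbf{A}^*$ is the adjacency matrix of $G$ with every diagonal entry replaced by $2$. A set $R$ of columns resolves a matrix if its rows restricted to the columns of $R$ are pairwise distinct; a set $R$ of vertices resolves $G$ if every vertex is uniquely determined by its vector of shortest-path distances to the vertices of $R$. *)

From HB Require Import structures.
From mathcomp Require Import all_boot all_order all_algebra.
Set Implicit Arguments. Unset Strict Implicit. Unset Printing Implicit Defensive.
Import Order.TTheory GRing.Theory Num.Theory.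

Section SBM.
Variable n : nat.
Local Notation V := ('I_n).

(* A simple undirected graph on V is encoded by the set E of its edges {u,v}
   written as ordered pairs (u,v) with u < v. *)
Definition upairs : {set V * V} := [set p : V * V | (p.1 < p.2)%N].

Definition adj (E : {set V * V}) (u v : V) : bool :=
  ((u, v) \in E) || ((v, u) \in E).

Definition Astar (E : {set V * V}) (u v : V) : nat :=
  if u == v then 2 else nat_of_bool (adj E u v).

Definition rows_agree (E : {set V * V}) (R : {set V}) (u v : V) : bool :=
  [forall r in R, Astar E u r == Astar E v r].

Definition resolves_mx (E : {set V * V}) (R : {set V}) : bool :=
  [forall u, forall v, (u != v) ==> ~~ rows_agree E R u v].

Definition Wcount (E : {set V * V}) (R : {set V}) : nat :=
  #|[set p : V * V | (p.1 < p.2)%N & rows_agree E R p.1 p.2]|.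

Fixpoint ball (E : {set V * V}) (u : V) (d : nat) : {set V} :=
  match d with
  | 0 => [set u]
  | d'.+1 => ball E u d' :|: [set v | [exists w in ball E u d', adj E w v]]
  end.

(* shortest-path distance; None = infinite (different components).
   Finite distances are < n. *)
Definition dist (E : {set V * V}) (u v : V) : option nat :=
  let d := find (fun d => v \in ball E u d) (iota 0 n) in
  if (d < n)%N then Some d else None.

Definition resolves_graph (E : {set V * V}) (R : {set V}) : Prop :=
  forall u v : V, (forall r, r \in R -> dist E r u = dist E r v) -> u = v.

Variable (Rr : realFieldType) (c : nat) (comm : V -> 'I_c) (P : 'M[Rr]_c).

Definition sbm_weight (E : {set V * V}) : Rr :=
  (\prod_(p in upairs)
     (if p \in E then P (comm p.1) (comm p.2) else 1 - P (comm p.1) (comm p.2)))%R.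

Definition sbm_prob (A : pred {set V * V}) : Rr :=
  (\sum_(E in powerset upairs | A E) sbm_weight E)%R.

Definition sbm_exp (X : {set V * V} -> nat) : Rr :=
  (\sum_(E in powerset upairs) sbm_weight E * (X E)%:R)%R.

Definition csize (i : 'I_c) : nat := #|[set v : V | comm v == i]|.

Definition s_coef (i j : 'I_c) : nat :=
  if i == j then 'C(csize i, 2) else csize i * csize j.

Definition r_coef (i j l : 'I_c) : Rr :=
  (P i l * P j l + (1 - P i l) * (1 - P j l))%R.

Definition fbound (k : 'I_c -> nat) : Rr :=
  (\sum_(i : 'I_c) \sum_(j : 'I_c | (i <= j)%N)
     (s_coef i j)%:R * \prod_(l : 'I_c) r_coef i j l ^+ k l)%R.

End SBM.

From HB Require Import structures.
From mathcomp Require Import all_boot all_order all_algebra.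
From mathcomp Require Import zify lra.
Set Implicit Arguments. Unset Strict Implicit. Unset Printing Implicit Defensive.
Import Order.TTheory GRing.Theory Num.Theory.

(* By linearity, E(W) is a sum over pairs u < v of the probability that rows u
   and v of A^* agree on R.  This is 0 if u or v lies in R, since a diagonal
   entry 2 never matches an off-diagonal one; otherwise it is the product over
   r in R of the probability that the potential edges {u,r} and {v,r} are both
   present or both absent, i.e. of r(comm u, comm v, comm r).  Grouping the
   pairs by their communities gives f(k), which is nonincreasing in k because
   0 <= r <= 1.  Markov's inequality gives P(W > 0) <= E(W).  Finally, the entry
   of A^* at (u, r) is 2, 1 or 0 according as d(r, u) is 0, 1 or larger, so
   vertices with equal distance vectors to R have equal rows on R. *)

Local Open Scope ring_scope.

Section PowersetSums.
Variables (T : finType) (R : comNzRingType).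
Implicit Types (A B U : {set T}).

Lemma big_powersetU A B (F : {set T} -> R) : [disjoint A & B] ->
  \sum_(E in powerset (A :|: B)) F E =
  \sum_(E1 in powerset A) \sum_(E2 in powerset B) F (E1 :|: E2).
Proof.
move=> dAB; rewrite pair_big_dep /=.
rewrite (reindex_onto (fun p : {set T} * {set T} => p.1 :|: p.2)
           (fun E => (E :&: A, E :&: B))) /=; last first.
  by move=> E; rewrite powersetE => sE; rewrite -setIUr; apply/setIidPl.
apply: eq_bigl => -[E1 E2] /=; rewrite !powersetE.
apply/idP/idP; first by case/andP=> _ /eqP [<- <-]; rewrite !subsetIr.
case/andP=> s1 s2; rewrite (setUSS s1 s2) /=.
have dis1 : E1 :&: B = set0 by apply/eqP; rewrite setI_eq0 (disjointWl s1).
have dis2 : E2 :&: A = set0.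
  by apply/eqP; rewrite setI_eq0 (disjointWl s2) // disjoint_sym.
by rewrite !setIUl (setIidPl s1) (setIidPl s2) dis1 dis2 setU0 set0U.
Qed.

Lemma big_powerset_prod U (a : T -> bool -> R) :
  \sum_(E in powerset U) \prod_(p in U) a p (p \in E) =
  \prod_(p in U) (a p true + a p false).
Proof.
have := @bigA_distr R 0 1 *%R +%R T (fun p => if p \in U then a p true else 0)
          (fun p => if p \in U then a p false else 1).
rewrite [in RHS](bigID (fun J : {set T} => J \in powerset U)) /=.
rewrite [X in _ = _ + X]big1 ?addr0; last first.
  move=> J; rewrite powersetE => /subsetPn [p pJ pU].
  by rewrite (bigD1 p) //= pJ (negbTE pU) mul0r.
have -> : \prod_p ((if p \in U then a p true else 0) +
                   (if p \in U then a p false else 1))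
          = \prod_(p in U) (a p true + a p false).
  by rewrite [RHS]big_mkcond; apply: eq_bigr => p _; case: ifP; rewrite ?addr0 ?add0r.
move=> ->; apply: eq_big => // J; rewrite powersetE => sJ.
rewrite big_mkcond; apply: eq_bigr => p _.
case: ifP => pU; first by case: ifP.
by case: ifP => // pJ; have := subsetP sJ p pJ; rewrite pU.
Qed.

Lemma big_powersetU_prod A B (a : T -> bool -> R) (F : {set T} -> R) :
  [disjoint A & B] ->
  \sum_(E in powerset (A :|: B)) (\prod_(p in A :|: B) a p (p \in E)) * F E =
  \sum_(E1 in powerset A) (\prod_(p in A) a p (p \in E1)) *
    \sum_(E2 in powerset B) (\prod_(p in B) a p (p \in E2)) * F (E1 :|: E2).
Proof.
move=> dAB; rewrite big_powersetU //; apply: eq_bigr => E1; rewrite powersetE => s1.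
rewrite big_distrr /=; apply: eq_bigr => E2; rewrite powersetE => s2.
rewrite mulrA; congr (_ * _).
rewrite (eq_bigl [predU A & B]); last by move=> p; rewrite !inE.
rewrite bigU //=; congr (_ * _); apply: eq_bigr => p pA; rewrite inE.
  by rewrite (disjointFr (disjointWr s2 dAB) pA) orbF.
by rewrite (disjointFl (disjointWl s1 dAB) pA).
Qed.
End PowersetSums.

Section Marginals.
Variables (I T : finType) (R : comNzRingType) (a : T -> bool -> R).
Hypothesis a_sum1 : forall p, a p true + a p false = 1.
Implicit Types (U : {set T}) (S : {set I}).

Lemma prod_pick_preimage U S (f : I -> T) (H : I -> R) :
  {in S &, injective f} -> (forall i, i \in S -> f i \in U) ->
  \prod_(i in S) H i = \prod_(p in U) oapp H 1 [pick i in S | f i == p].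
Proof.
move=> f_inj fSU; rewrite (big_setID (f @: S)) /=.
rewrite [X in _ = _ * X]big1 ?mulr1; last first.
  move=> p; rewrite inE => /andP [pnfS _].
  case: pickP => // i /andP [iS /eqP fip].
  by move: pnfS; rewrite -fip imset_f.
have -> : U :&: (f @: S) = f @: S.
  by apply/setIidPr/subsetP => _ /imsetP [i iS ->]; apply: fSU.
rewrite big_imset //; apply: eq_bigr => i iS.
case: pickP => [j /andP [jS /eqP fji] | /(_ i)]; last by rewrite iS eqxx.
by rewrite (f_inj _ _ jS iS fji).
Qed.

Lemma big_powerset_marginal U S (f : I -> T) (h : I -> bool -> R) :
  {in S &, injective f} -> (forall i, i \in S -> f i \in U) ->
  \sum_(E in powerset U) (\prod_(p in U) a p (p \in E)) *
      \prod_(i in S) h i (f i \in E)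
  = \prod_(i in S) (a (f i) true * h i true + a (f i) false * h i false).
Proof.
move=> f_inj fSU.
pose g p b := a p b * oapp (h^~ b) 1 [pick i in S | f i == p].
transitivity (\sum_(E in powerset U) \prod_(p in U) g p (p \in E)).
  apply: eq_bigr => E _; rewrite big_split (prod_pick_preimage _ f_inj fSU) /=.
  congr (_ * _); apply: eq_bigr => p _.
  by case: pickP => //= i /andP [_ /eqP ->].
rewrite big_powerset_prod (prod_pick_preimage _ f_inj fSU).
apply: eq_bigr => p pU; rewrite /g.
by case: pickP => /= [i /andP [_ /eqP <-] // | _]; rewrite !mulr1 a_sum1.
Qed.

Lemma big_powerset_agree U S (x y : I -> T) :
  {in S &, injective x} -> {in S &, injective y} ->
  (forall i, i \in S -> x i \in U) -> (forall i, i \in S -> y i \in U) ->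
  (forall i j, i \in S -> j \in S -> x i != y j) ->
  \sum_(E in powerset U) (\prod_(p in U) a p (p \in E)) *
      \prod_(i in S) ((x i \in E) == (y i \in E))%:R
  = \prod_(i in S) (a (x i) true * a (y i) true + a (x i) false * a (y i) false).
Proof.
move=> x_inj y_inj xSU ySU xy.
set Y := y @: S; set X := U :\: Y.
have YU : Y \subset U by apply/subsetP => _ /imsetP [i iS ->]; apply: ySU.
have dXY : [disjoint X & Y].
  by rewrite disjoints_subset; apply/subsetP => p; rewrite !inE => /andP [].
have xSX i : i \in S -> x i \in X.
  move=> iS; rewrite !inE xSU // andbT; apply/imsetP => -[j jS /eqP].
  by rewrite (negbTE (xy i j iS jS)).
have ySY i : i \in S -> y i \in Y by move=> iS; apply: imset_f.
have -> : U = X :|: Y.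
  apply/setP => p; rewrite !inE.
  by case pY: (p \in Y); rewrite ?(subsetP YU p pY) ?orbT ?andbT ?orbF.
rewrite big_powersetU_prod // -(big_powerset_marginal (a \o y) x_inj xSX).
apply: eq_bigr => E1; rewrite powersetE => sE1; congr (_ * _).
pose h i b := ((x i \in E1) == b)%:R : R.
transitivity (\sum_(E2 in powerset Y)
   (\prod_(p in Y) a p (p \in E2)) * \prod_(i in S) h i (y i \in E2)).
  apply: eq_bigr => E2; rewrite powersetE => sE2; congr (_ * _).
  apply: eq_bigr => i iS; rewrite /h !inE.
  rewrite (disjointFr (disjointWr sE2 dXY) (xSX i iS)) orbF.
  by rewrite (disjointFl (disjointWl sE1 dXY) (ySY i iS)).
rewrite big_powerset_marginal //.
apply: eq_bigr => i iS; rewrite /h /=.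
by case: (x i \in E1); rewrite ?mulr1 ?mulr0 ?addr0 ?add0r.
Qed.
End Marginals.

Lemma sum_sym_triangle (c : nat) (V : nmodType) (N s : 'I_c -> 'I_c -> nat)
    (g : 'I_c -> 'I_c -> V) :
  (forall i j, g i j = g j i) -> (forall i, N i i = s i i) ->
  (forall i j : 'I_c, (i < j)%N -> (N i j + N j i)%N = s i j) ->
  \sum_(i : 'I_c) \sum_(j : 'I_c) g i j *+ N i j
  = \sum_(i : 'I_c) \sum_(j : 'I_c | (i <= j)%N) g i j *+ s i j.
Proof.
move=> gC Ndiag Noff.
have lower_to_upper :
    \sum_(i : 'I_c) \sum_(j : 'I_c | (j < i)%N) g i j *+ N i j
  = \sum_(i : 'I_c) \sum_(j : 'I_c | (i < j)%N) g i j *+ N j i.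
  by rewrite (exchange_big_dep predT) //=; apply: eq_bigr => i _;
     apply: eq_bigr => j _; rewrite gC.
transitivity (\sum_(i : 'I_c) (\sum_(j : 'I_c | (i <= j)%N) g i j *+ N i j
                    + \sum_(j : 'I_c | (i < j)%N) g i j *+ N j i)).
  rewrite big_split /= -lower_to_upper -big_split /=; apply: eq_bigr => i _.
  rewrite (bigID (fun j : 'I_c => (i <= j)%N)) /=; congr (_ + _).
  by apply: eq_bigl => j; rewrite -ltnNge.
apply: eq_bigr => i _.
have upper (F : 'I_c -> V) :
    \sum_(j : 'I_c | (i <= j)%N && (j != i)) F j = \sum_(j : 'I_c | (i < j)%N) F j.
  by apply: eq_bigl => j; rewrite ltn_neqAle andbC eq_sym.
rewrite [X in X + _](bigD1 i) //= [RHS](bigD1 i) //= !upper -addrA -big_split /=.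
congr (_ + _); first by rewrite Ndiag.
by apply: eq_bigr => j ij; rewrite -mulrnDr Noff.
Qed.

Lemma prod_fibers_exp (I J : finType) (R : comNzRingType) (f : I -> J)
    (A : {set I}) (F : J -> R) :
  \prod_(i in A) F (f i) = \prod_(j : J) F j ^+ #|A :&: [set i | f i == j]|.
Proof.
rewrite (partition_big f predT) //=; apply: eq_bigr => j _.
rewrite (eq_bigr (fun _ => F j)) => [|i /andP [_ /eqP ->] //].
by rewrite prodr_const; congr (_ ^+ _); apply: eq_card => i; rewrite !inE.
Qed.

Section CommunityPairs.
Variables (n c : nat) (comm : 'I_n -> 'I_c).
Local Open Scope nat_scope.
Local Notation block i := [set v : 'I_n | comm v == i].

Definition npairs (i j : 'I_c) : nat :=
  #|[set p in upairs n | (comm p.1 == i) && (comm p.2 == j)]|.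

Lemma csize_mul_npairs i j :
  csize comm i * csize comm j = npairs i j + npairs j i + #|block i :&: block j|.
Proof.
rewrite /csize -cardsX; set X := setX _ _.
rewrite -(cardsID (upairs n) X) -addnA.
have -> : X :&: upairs n = [set p in upairs n | (comm p.1 == i) && (comm p.2 == j)].
  by apply/setP => -[u v]; rewrite !inE /= andbC.
congr (_ + _); rewrite -(cardsID [set p : 'I_n * 'I_n | p.2 < p.1]).
have -> : npairs j i = #|swap_pair @: [set p in upairs n |
                           (comm p.1 == j) && (comm p.2 == i)]|.
  by rewrite card_imset //; apply: can_inj swap_pairK.
congr (_ + _).
  apply: eq_card => -[u v]; rewrite !inE /=; apply/idP/idP.
    case/andP => /and3P [vNu cu cv] vu.
    by apply/imsetP; exists (v, u) => //; rewrite !inE /= vu cu cv.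
  case/imsetP => -[u' v']; rewrite !inE /= => /andP [lt /andP [cu cv]] [-> ->].
  by rewrite cu cv lt -leqNgt ltnW.
rewrite -(card_imset _ (f := fun v : 'I_n => (v, v))); last by move=> u v [].
apply: eq_card => -[u v]; rewrite !inE /=; apply/idP/idP.
  case/and4P => uNv vNu cu cv.
  have uv : u = v by apply/val_inj/eqP; rewrite eqn_leq (leqNgt u) (leqNgt v) uNv vNu.
  by subst v; apply/imsetP; exists u; first by rewrite !inE cu cv.
by case/imsetP => w; rewrite !inE => /andP [cu cv] [-> ->]; rewrite cu cv ltnn.
Qed.

Lemma npairs_diag i : npairs i i = 'C(csize comm i, 2).
Proof.
have := csize_mul_npairs i i; rewrite setIid -/(csize comm i) bin2.
move: (csize comm i) (npairs i i) => m N count.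
have -> : m * m.-1 = N.*2 by move: count; case: m => [|m] /=; lia.
by rewrite doubleK.
Qed.

Lemma npairs_offdiag i j : i != j -> npairs i j + npairs j i = csize comm i * csize comm j.
Proof.
move=> ij; rewrite csize_mul_npairs.
suff -> : block i :&: block j = set0 by rewrite cards0 addn0.
by apply/setP => v; rewrite !inE; apply/negbTE; apply: contra ij => /andP [/eqP <- /eqP ->].
Qed.

Lemma sum_upairs_npairs (V : nmodType) (g : 'I_c -> 'I_c -> V) :
  (\sum_(p in upairs n) g (comm p.1) (comm p.2) =
   \sum_(i : 'I_c) \sum_(j : 'I_c) g i j *+ npairs i j)%R.
Proof.
rewrite (partition_big (fun p : 'I_n * 'I_n => comm p.1) predT) //=.
apply: eq_bigr => i _.
rewrite (partition_big (fun p : 'I_n * 'I_n => comm p.2) predT) //=.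
apply: eq_bigr => j _.
rewrite (eq_bigr (fun _ => g i j)); last by move=> p /andP [/andP [_ /eqP ->] /eqP ->].
rewrite sumr_const /npairs; congr (_ *+ _).
by apply: eq_card => p; rewrite -topredE /= !inE andbA.
Qed.

Lemma sum_upairs_comm (V : nmodType) (g : 'I_c -> 'I_c -> V) :
  (forall i j, g i j = g j i) ->
  (\sum_(p in upairs n) g (comm p.1) (comm p.2) =
   \sum_(i : 'I_c) \sum_(j : 'I_c | (i <= j)%N) g i j *+ s_coef comm i j)%R.
Proof.
move=> gC; rewrite sum_upairs_npairs (sum_sym_triangle (s := s_coef comm)) //.
- by move=> i; rewrite /s_coef eqxx npairs_diag.
- by move=> i j ij; rewrite /s_coef ifN ?npairs_offdiag // neq_ltn ij.
Qed.
End CommunityPairs.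

Section Graph.
Variable n : nat.
Local Open Scope nat_scope.
Implicit Types (E : {set 'I_n * 'I_n}) (u v r : 'I_n) (R : {set 'I_n}).

Lemma adjC E u v : adj E u v = adj E v u.
Proof. by rewrite /adj orbC. Qed.

Lemma rows_agreeC E R u v : rows_agree E R u v = rows_agree E R v u.
Proof. by apply: eq_forallb => r; rewrite eq_sym. Qed.

Lemma resolves_mxN E R : ~~ resolves_mx E R = (0 < Wcount E R).
Proof.
rewrite /Wcount card_gt0; apply/idP/set0Pn.
  case/forallPn => u /forallPn [v]; rewrite negb_imply negbK => /andP [uv ag].
  case: (ltngtP u v) => [uv' | vu | /val_inj eq_uv].
  - by exists (u, v); rewrite inE /= uv' ag.
  - by exists (v, u); rewrite inE /= vu rows_agreeC ag.
  - by rewrite eq_uv eqxx in uv.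
case=> -[u v]; rewrite inE /= => /andP [lt ag].
apply/forallPn; exists u; apply/forallPn; exists v.
by rewrite negb_imply negbK ag andbT neq_ltn lt.
Qed.

Definition edge u v : 'I_n * 'I_n := if u < v then (u, v) else (v, u).

Lemma edge_upairs u v : u != v -> edge u v \in upairs n.
Proof. by rewrite neq_ltn /edge inE; case: ltnP. Qed.

Lemma adj_edge E u v : E \subset upairs n -> u != v -> adj E u v = (edge u v \in E).
Proof.
move=> sE uv; rewrite /adj /edge; case: ltnP => [uv' | vu].
  by case Evu: ((v, u) \in E); rewrite ?orbF //; have := subsetP sE _ Evu;
     rewrite inE /= ltnNge ltnW.
by case Euv: ((u, v) \in E) => //; have := subsetP sE _ Euv; rewrite inE /= ltnNge vu.
Qed.

Lemma edge_eq u v u' v' :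
  edge u v = edge u' v' -> (u = u' /\ v = v') \/ (u = v' /\ v = u').
Proof. by rewrite /edge; case: (ltnP u v); case: (ltnP u' v') => _ _ [] -> ->; auto. Qed.

Lemma edge_inj u v v' : u != v -> u != v' -> edge u v = edge u v' -> v = v'.
Proof. by move=> uv uv' /edge_eq [[_ ->] | [_ vu]] //; rewrite vu eqxx in uv. Qed.

Lemma edge_neq u u' v v' : u != u' -> u != v' -> edge u v != edge u' v'.
Proof.
by move=> uu' uv'; apply/eqP => /edge_eq [[eq_u _] | [eq_u _]];
  [rewrite eq_u eqxx in uu' | rewrite eq_u eqxx in uv'].
Qed.
End Graph.

Section Distances.
Variable n : nat.
Local Open Scope nat_scope.
Implicit Types (E : {set 'I_n * 'I_n}) (u v r : 'I_n) (R : {set 'I_n}).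

Lemma dist_ball E r u d : dist E r u = Some d -> u \in ball E r d.
Proof.
rewrite /dist; case: ifP => // lt [<-].
have hp : has (fun d => u \in ball E r d) (iota 0 n) by rewrite has_find size_iota.
by have := nth_find 0 hp; rewrite nth_iota // add0n.
Qed.

Lemma dist_first_ball E r u d : d < n -> u \in ball E r d ->
  (forall d', d' < d -> u \notin ball E r d') -> dist E r u = Some d.
Proof.
move=> ltd ub nb; rewrite /dist.
set p := fun d => u \in ball E r d.
have hp : has p (iota 0 n) by apply/hasP; exists d; rewrite ?mem_iota.
suff -> : find p (iota 0 n) = d by rewrite ltd.
apply/eqP; rewrite eqn_leq; apply/andP; split.
  rewrite leqNgt; apply/negP => lt.
  by have := before_find 0 lt; rewrite nth_iota // add0n /p ub.
rewrite leqNgt; apply/negP => lt.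
have := nth_find 0 hp; rewrite nth_iota; last exact: ltn_trans lt ltd.
by rewrite add0n; apply/negP; apply: nb.
Qed.

Lemma ball1 E r u : (u \in ball E r 1) = (u == r) || adj E r u.
Proof.
rewrite /= !inE; congr (_ || _); apply/existsP/idP => [[w] | ru].
  by rewrite inE => /andP [/eqP ->].
by exists r; rewrite inE eqxx.
Qed.

Lemma dist_self E r : dist E r r = Some 0.
Proof. by apply: dist_first_ball; rewrite /= ?inE // (leq_ltn_trans _ (ltn_ord r)). Qed.

Lemma dist_adj E r u : u != r -> adj E r u -> dist E r u = Some 1.
Proof.
move=> ur ru; apply: dist_first_ball; last by case=> // _; rewrite /= inE.
- rewrite neq_ltn in ur; case/orP: ur => lt.
    exact: leq_ltn_trans (leq_ltn_trans (leq0n u) lt) (ltn_ord r).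
  exact: leq_ltn_trans (leq_ltn_trans (leq0n r) lt) (ltn_ord u).
- by rewrite ball1 ru orbT.
Qed.

Lemma Astar_dist E u r :
  Astar E u r = if dist E r u == Some 0 then 2 else (dist E r u == Some 1 : nat).
Proof.
rewrite /Astar; case: eqVneq => [-> | ur]; first by rewrite dist_self.
case: ifP => [/eqP /dist_ball | _]; first by rewrite /= inE (negbTE ur).
case ur_adj: (adj E u r); first by rewrite dist_adj // adjC.
by case: eqP => // /dist_ball; rewrite ball1 (negbTE ur) adjC ur_adj.
Qed.

Lemma resolves_mx_graph E R : resolves_mx E R -> resolves_graph E R.
Proof.
move=> /forallP res u v same_dist; apply/eqP/negPn/negP => uv.
move: (res u) => /forallP /(_ v); rewrite uv => /forallP; apply => r.
by apply/implyP => rR; rewrite !Astar_dist same_dist.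
Qed.
End Distances.

Section SBMBounds.
Variables (n : nat) (Rr : realFieldType) (c : nat) (comm : 'I_n -> 'I_c).
Variable P : 'M[Rr]_c.
Hypothesis P_sym : P^T = P.
Hypothesis P01 : forall i j, 0 <= P i j <= 1.
Implicit Types (E : {set 'I_n * 'I_n}) (u v r : 'I_n) (R : {set 'I_n}).

Lemma sbm_weight_ge0 E : 0 <= sbm_weight comm P E.
Proof.
apply: prodr_ge0 => p _; have /andP [P_ge0 P_le1] := P01 (comm p.1) (comm p.2).
by case: ifP; rewrite ?subr_ge0.
Qed.

Lemma sbm_prob_gt0_le_exp (X : {set 'I_n * 'I_n} -> nat) :
  sbm_prob comm P (fun E => (0 < X E)%N) <= sbm_exp comm P X.
Proof.
rewrite /sbm_prob /sbm_exp big_mkcondr /=; apply: ler_sum => E _.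
case: ifP => [X_gt0 | _]; last by rewrite mulr_ge0 ?sbm_weight_ge0.
by rewrite ler_peMr ?sbm_weight_ge0 // ler1n.
Qed.

Lemma r_coef_ge0 i j l : 0 <= r_coef P i j l.
Proof.
have /andP [? ?] := P01 i l; have /andP [? ?] := P01 j l.
by rewrite addr_ge0 ?mulr_ge0 ?subr_ge0.
Qed.

Lemma r_coef_le1 i j l : r_coef P i j l <= 1.
Proof. have /andP [? ?] := P01 i l; have /andP [? ?] := P01 j l; rewrite /r_coef; nra. Qed.

Lemma r_coefC i j l : r_coef P i j l = r_coef P j i l.
Proof. by rewrite /r_coef mulrC [(1 - _) * _]mulrC. Qed.

Lemma fbound_le k1 k2 : (forall l, k1 l <= k2 l)%N -> fbound comm P k2 <= fbound comm P k1.
Proof.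
move=> le_k; apply: ler_sum => i _; apply: ler_sum => j _.
apply: ler_wpM2l; first exact: ler0n.
apply: ler_prod => l _; rewrite exprn_ge0 ?r_coef_ge0 //=.
by rewrite ler_wiXn2l ?r_coef_ge0 ?r_coef_le1.
Qed.

Lemma P_edge u r : P (comm (edge u r).1) (comm (edge u r).2) = P (comm u) (comm r).
Proof.
rewrite /edge; case: ifP => //= _.
by have := congr1 (fun M : 'M[Rr]_c => M (comm u) (comm r)) P_sym; rewrite mxE.
Qed.

Lemma rows_agree_prod E R u v :
  ((rows_agree E R u v : nat)%:R = \prod_(r in R) (Astar E u r == Astar E v r : nat)%:R :> Rr).
Proof.
case: (boolP (rows_agree E R u v)) => [/forall_inP agree | /forall_inPn [r rR ne]].
  by rewrite big1 // => r /agree ->.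
by rewrite (bigD1 r) //= (negbTE ne) mul0r.
Qed.

Lemma rows_agree_mem E R u v : u != v -> (u \in R) || (v \in R) -> rows_agree E R u v = false.
Proof.
move=> uv /orP [uR | vR]; apply/negbTE/forall_inPn.
  by exists u => //; rewrite /Astar eqxx (eq_sym v) (negbTE uv); case: adj.
by exists v => //; rewrite /Astar eqxx (negbTE uv); case: adj.
Qed.

(* Outside R, agreement of two rows on R is a condition on 2 #|R| distinct
   potential edges, which are independent in the SBM. *)
Lemma sbm_exp_rows_agree R u v : u != v -> u \notin R -> v \notin R ->
  sbm_exp comm P (fun E => rows_agree E R u v) =
  \prod_(r in R) r_coef P (comm u) (comm v) (comm r).
Proof.
move=> uv uR vR.
have xNr x r : x \notin R -> r \in R -> x != r.
  by move=> xR rR; apply: contraNneq xR => ->.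
transitivity (\sum_(E in powerset (upairs n)) sbm_weight comm P E *
    \prod_(r in R) ((edge u r \in E) == (edge v r \in E) : nat)%:R).
  apply: eq_bigr => E; rewrite powersetE => sE; rewrite rows_agree_prod.
  congr (_ * _); apply: eq_bigr => r rR.
  rewrite /Astar (negbTE (xNr u r uR rR)) (negbTE (xNr v r vR rR)).
  by rewrite -!adj_edge ?xNr //; case: adj; case: adj.
rewrite (big_powerset_agree (a := fun p b => if b then P (comm p.1) (comm p.2)
                                             else 1 - P (comm p.1) (comm p.2))).
- by apply: eq_bigr => r rR /=; rewrite !P_edge.
- by move=> p /=; rewrite addrC subrK.
- by move=> r r' rR r'R; apply: edge_inj; apply: xNr.
- by move=> r r' rR r'R; apply: edge_inj; apply: xNr.
- by move=> r rR; apply/edge_upairs/xNr.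
- by move=> r rR; apply/edge_upairs/xNr.
- by move=> r r' _ r'R; apply: edge_neq; last exact: xNr.
Qed.

Lemma sbm_exp_Wcount R :
  sbm_exp comm P (fun E => Wcount E R) =
  \sum_(p in upairs n) sbm_exp comm P (fun E => rows_agree E R p.1 p.2).
Proof.
rewrite /sbm_exp exchange_big /=; apply: eq_bigr => E _.
rewrite -big_distrr /= -natr_sum /Wcount -sum1dep_card big_mkcondr /=.
by congr (_ * _%:R); apply: eq_big => [p | p _]; rewrite ?inE //; case: rows_agree.
Qed.

Lemma sbm_exp_Wcount_le R (k : 'I_c -> nat) :
  (forall l, #|R :&: [set v | comm v == l]| = k l) ->
  sbm_exp comm P (fun E => Wcount E R) <= fbound comm P k.
Proof.
move=> R_comm.
pose g i j := \prod_(l : 'I_c) r_coef P i j l ^+ k l.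
have -> : fbound comm P k = \sum_(p in upairs n) g (comm p.1) (comm p.2).
  rewrite sum_upairs_comm => [|i j]; last by apply: eq_bigr => l _; rewrite r_coefC.
  by apply: eq_bigr => i _; apply: eq_bigr => j _; rewrite mulr_natl.
rewrite sbm_exp_Wcount; apply: ler_sum => -[u v]; rewrite inE /= => lt_uv.
have uv : u != v by rewrite neq_ltn lt_uv.
have [uv_R | ] := boolP ((u \in R) || (v \in R)).
  rewrite /sbm_exp big1 => [|E _]; last by rewrite rows_agree_mem // mulr0.
  by apply: prodr_ge0 => l _; rewrite exprn_ge0 ?r_coef_ge0.
rewrite negb_or => /andP [uR vR].
rewrite sbm_exp_rows_agree // prod_fibers_exp.
by under eq_bigr do rewrite R_comm.
Qed.
End SBMBounds.

Theorem mainTheorem9 (Rr : realFieldType) (n c : nat) (comm : 'I_n -> 'I_c)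
    (P : 'M[Rr]_c)
    (HPsym : (P^T)%R = P)
    (HP01 : forall i j : 'I_c, (0 <= P i j <= 1)%R)
    (k : 'I_c -> nat) (R : {set 'I_n})
    (HR : forall l : 'I_c, #|R :&: [set v | comm v == l]| = k l) :
  sbm_prob comm P (fun E => ~~ resolves_mx E R)
    = sbm_prob comm P (fun E => (0 < Wcount E R)%N)
  /\ (sbm_prob comm P (fun E => (0 < Wcount E R)%N)
      <= sbm_exp comm P (fun E => Wcount E R))%R
  /\ (sbm_exp comm P (fun E => Wcount E R) <= fbound comm P k)%R
  /\ (forall k1 k2 : 'I_c -> nat, (forall l, k1 l <= k2 l)%N ->
        (fbound comm P k2 <= fbound comm P k1)%R)
  /\ (forall E : {set 'I_n * 'I_n}, E \subset upairs n ->
        resolves_mx E R -> resolves_graph E R).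
Proof.
split; first by apply: eq_bigl => E; rewrite resolves_mxN.
split; first exact: sbm_prob_gt0_le_exp.
split; first exact: sbm_exp_Wcount_le.
split; first exact: fbound_le.
by move=> E _; apply: resolves_mx_graph.
Qed.
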